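(* In the DGL-test-based classification setting described in the context, with $M\ge2$, $n,N\ge1$, $\alpha=N/n$ and $D=\min_{i\neq j}V(P_i,P_j)$, the classification error probability satisfies, for every prior $(\pi_1,\dots,\pi_M)$, $$\Pr[e_{\mathrm{CL}}]\le 2M\exp\!\Big(-n\Big(\frac{2\alpha D^2}{(3|\mathcal X|+2\sqrt\alpha)^2}-\max\Big\{\frac{2\ln(M-1)}{n},\frac{\ln|\mathcal X|}{n}\Big\}\Big)\Big).$$
   Context: Setting: $\mathcal X$ is a finite alphabet and $P_1,\dots,P_M$ are (unknown) distributions on $\mathcal X$. For distributions $P,Q$ on $\mathcal X$, $V(P,Q)=\max_{F\subseteq\mathcal X}|P(F)-Q(F)|=\frac12\sum_{a}|P(a)-Q(a)|$. Training sequences $\vec t_i^{\,N}=(t_{i1},\dots,t_{iN})$, $i=1,\dots,M$, are mutually independent, with $\vec t_i^{\,N}$ i.i.d. from $P_i$; $T_i(a)=\frac1N\#\{k:t_{ik}=a\}$ is its empirical distribution, and $T_i(A)=\sum_{a\in A}T_i(a)$. Under hypothesis $\mathcal H_i$, the test sequence $\vec x^{\,n}=(x_1,\dots,x_n)$ is i.i.d. from $P_i$ and independent of the training sequences. Classifier (DGL test with nominal distributions $T_i$): let $\mathcal A=\{A_{k,l}:1\le k<l\le M\}$ with $A_{k,l}=\{a\in\mathcal X: T_k(a)\ge T_l(a)\}$, let $\mu_n(A)=\frac1n\#\{m: x_m\in A\}$, define the score $s_j=\max_{A\in\mathcal A}|T_j(A)-\mu_n(A)|$, and output any index $\hat\imath$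 minimizing $s_j$ over $j$ (ties broken arbitrarily). Given a prior $\pi_i>0$, $\sum_i\pi_i=1$, the classification error probability is $\Pr[e_{\mathrm{CL}}]=\sum_{i=1}^M\pi_i\Pr[\hat\imath\neq i\mid\mathcal H_i]$, the probability taken over both the test and training sequences. *)

From HB Require Import structures.
From mathcomp Require Import all_boot all_order all_algebra.
From mathcomp Require Import all_classical all_reals all_analysis.
Set Implicit Arguments. Unset Strict Implicit. Unset Printing Implicit Defensive.
Import Order.TTheory GRing.Theory Num.Theory.
Local Open Scope ring_scope.

Section DGL.
Variables (R : realType) (X : finType).

Definition is_distr (P : X -> R) : Prop :=
  (forall a, 0 <= P a) /\ \sum_(a : X) P a = 1.

Definition tvdist (P Q : X -> R) : R := 2^-1 * \sum_(a : X) `|P a - Q a|.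

(* D = min_{i <> j} V(P_i,P_j); the neutral element 1 is harmless since
   V <= 1 for distributions and M >= 2 makes the range nonempty. *)
Definition Dmin (M : nat) (P : 'I_M -> X -> R) : R :=
  \big[Num.min/1]_(i < M) \big[Num.min/1]_(j < M | i != j) tvdist (P i) (P j).

Definition empirical (N : nat) (t : {ffun 'I_N -> X}) (a : X) : R :=
  #|[set k | t k == a]|%:R / N%:R.

Definition emp_set (N : nat) (t : {ffun 'I_N -> X}) (A : {set X}) : R :=
  \sum_(a in A) empirical t a.

Definition mu_test (n : nat) (x : {ffun 'I_n -> X}) (A : {set X}) : R :=
  #|[set m | x m \in A]|%:R / n%:R.

Definition scheffe (M N : nat) (t : {ffun 'I_M -> {ffun 'I_N -> X}}) (k l : 'I_M)
  : {set X} := [set a | empirical (t l) a <= empirical (t k) a].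

(* score s_j = max_{k<l} |T_j(A_{k,l}) - mu_n(A_{k,l})| (all terms are >= 0,
   so the neutral element 0 does not change the maximum) *)
Definition score (M N n : nat) (t : {ffun 'I_M -> {ffun 'I_N -> X}})
  (x : {ffun 'I_n -> X}) (j : 'I_M) : R :=
  \big[Num.max/0]_(k < M) \big[Num.max/0]_(l < M | (k < l)%N)
     `|emp_set (t j) (scheffe t k l) - mu_test x (scheffe t k l)|.

(* a decision rule is a DGL classifier if it always outputs a minimizer of the score
   (arbitrary tie-breaking = arbitrary such rule) *)
Definition DGL_rule (M N n : nat)
  (g : {ffun 'I_M -> {ffun 'I_N -> X}} -> {ffun 'I_n -> X} -> 'I_M) : Prop :=
  forall t x j, score t x (g t x) <= score t x j.

Definition Ptrain (M N : nat) (P : 'I_M -> X -> R)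
  (t : {ffun 'I_M -> {ffun 'I_N -> X}}) : R :=
  \prod_(i < M) \prod_(k < N) P i (t i k).

Definition Ptest (n : nat) (Q : X -> R) (x : {ffun 'I_n -> X}) : R :=
  \prod_(m < n) Q (x m).

Definition err_CL (M N n : nat) (P : 'I_M -> X -> R) (pi : 'I_M -> R)
  (g : {ffun 'I_M -> {ffun 'I_N -> X}} -> {ffun 'I_n -> X} -> 'I_M) : R :=
  \sum_(i < M) pi i *
    \sum_(t : {ffun 'I_M -> {ffun 'I_N -> X}}) \sum_(x : {ffun 'I_n -> X})
      (if g t x != i then Ptrain P t * Ptest (P i) x else 0).

End DGL.

From HB Require Import structures.
From mathcomp Require Import all_boot all_order all_algebra.
From mathcomp Require Import all_classical all_reals all_analysis.
From mathcomp Require Import ring lra.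

Set Implicit Arguments.
Unset Strict Implicit.
Unset Printing Implicit Defensive.
Import Order.TTheory GRing.Theory Num.Theory.
Local Open Scope ring_scope.

(* Fix the true hypothesis i. If every empirical training distribution T_k is
   pointwise d1-close to P_k and every Scheffe set A of the rule has test
   frequency d2-close to P_i(A), the rule returns i: for j <> i the Scheffe set
   separating T_i from T_j witnesses V(T_i, T_j), while minimality of the score
   of the output bounds the same quantity by 2 V(T_i, P_i) + 2 d2, which the
   triangle inequality turns into V(P_i, P_j) < 2 (|X| d1 + d2).  So as soon as
   2 (|X| d1 + d2) <= D, an error needs one of at most M |X| + M (M - 1) / 2
   deviation events, each of probability at most 2 exp(-2 m d^2) by Hoeffding's
   inequality.  Taking d1 = 3 delta / 2 and d2 = sqrt alpha * delta with
   delta = D / (3 |X| + 2 sqrt alpha) makes both exponents at least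
   2 N delta^2, and the trivial bound 1 absorbs the remaining constants. *)

Section HoeffdingLemma.
Variable R : realType.

Lemma is_derive_ger0_ndecr (f df : R -> R) (x : R) :
  (forall y, is_derive y (1:R) f (df y)) -> (forall y, 0 <= y -> 0 <= df y) ->
  0 <= x -> f 0 <= f x.
Proof.
move=> f_df df_ge0 x_ge0.
apply: (@ger0_derive1_ndecr R f 0 x) => //.
- move=> y; rewrite in_itv /= => /andP[y_gt0 _].
  by rewrite derive1E derive_val; apply/df_ge0/ltW.
- by apply: derivable_within_continuous => y _; have [] := f_df y.
Qed.

Variable p : R.
Hypotheses (p_ge0 : 0 <= p) (p_le1 : p <= 1).

Lemma bernoulli_mgf_gt0 s : 0 < 1 - p + p * expR s.
Proof.
have e_gt0 := expR_gt0 s.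
have [p_lt1|p_ge1] := ltrP p 1; first by have := mulr_ge0 p_ge0 (ltW e_gt0); lra.
have -> : p = 1 by apply/le_anti; rewrite p_le1 p_ge1.
by rewrite subrr add0r mul1r.
Qed.

(* The derivative of the tilted mean is the tilted variance, at most 1/4. *)
Lemma bernoulli_tilted_mean_le s :
  0 <= s -> p * expR s / (1 - p + p * expR s) <= p + s / 4.
Proof.
move=> s_ge0.
pose F y := y / 4 + p - p * expR y / (1 - p + p * expR y).
pose dF y := 4^-1 - p * expR y * (1 - p) / (1 - p + p * expR y) ^+ 2.
have F_dF x : is_derive x (1:R) F (dF x).
  have W_neq0 := lt0r_neq0 (bernoulli_mgf_gt0 x).
  by rewrite /F; apply: is_derive_eq; rewrite /GRing.scale /dF /=; field.
have dF_ge0 x : 0 <= x -> 0 <= dF x.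
  move=> _; have W_gt0 := bernoulli_mgf_gt0 x; have := expR_gt0 x.
  (* AM-GM: 4 (1 - p) p e^x <= (1 - p + p e^x)^2 *)
  rewrite subr_ge0 ler_pdivrMr ?exprn_gt0 //.
  have := sqr_ge0 (1 - p - p * expR x); nra.
have := is_derive_ger0_ndecr F_dF dF_ge0 s_ge0.
rewrite /F mul0r add0r expR0 mulr1 subrK divr1 subrr; lra.
Qed.

Lemma bernoulli_mgf_le s :
  0 <= s -> (1 - p + p * expR s) * expR (- (s * p)) <= expR (s ^+ 2 / 8).
Proof.
move=> s_ge0.
pose F y := - ((1 - p + p * expR y) * expR (- (y * p + y ^+ 2 / 8))).
pose dF y := expR (- (y * p + y ^+ 2 / 8)) *
             ((1 - p + p * expR y) * (p + y / 4) - p * expR y).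
have F_dF x : is_derive x (1:R) F (dF x).
  by rewrite /F; apply: is_derive_eq; rewrite /GRing.scale /dF /=; field.
have dF_ge0 x : 0 <= x -> 0 <= dF x.
  move=> x_ge0; apply: mulr_ge0; first exact: expR_ge0.
  have W_gt0 := bernoulli_mgf_gt0 x.
  by rewrite subr_ge0 -ler_pdivrMl // mulrC bernoulli_tilted_mean_le.
have := is_derive_ger0_ndecr F_dF dF_ge0 s_ge0.
rewrite /F /= expR0 !mul0r expr0n mul0r addr0 oppr0 expR0 mulr1 subrK lerN2.
rewrite opprD expRD mulrA -ler_pdivlMr ?expR_gt0 // -expRN opprK; lra.
Qed.

End HoeffdingLemma.

Section EmpiricalFrequency.
Context {R : realType} {X : finType}.
Implicit Types (A : {set X}) (Q : X -> R).

Lemma mu_test_sum n (x : {ffun 'I_n -> X}) A :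
  mu_test R x A = (\sum_(m < n) (x m \in A)%:R) / n%:R.
Proof.
rewrite /mu_test -sum1dep_card natr_sum big_mkcond /=.
by congr (_ / _); apply: eq_bigr => m _; case: (x m \in A).
Qed.

Lemma mu_testC n (x : {ffun 'I_n -> X}) A :
  (0 < n)%N -> mu_test R x (~: A) = 1 - mu_test R x A.
Proof.
move=> n_gt0; have n_neq0 : n%:R != 0 :> R by rewrite pnatr_eq0 -lt0n.
rewrite !mu_test_sum -[X in _ = X - _](divff n_neq0) -mulrBl; congr (_ / _).
rewrite -[X in X%:R - _]card_ord -sumr_const -sumrB; apply: eq_bigr => m _.
by rewrite inE; case: (x m \in A); rewrite ?subrr ?subr0.
Qed.

Lemma empirical_mu_test N (y : {ffun 'I_N -> X}) a :
  empirical R y a = mu_test R y [set a].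
Proof.
by rewrite /empirical /mu_test; congr (_%:R / _); apply: eq_card => k; rewrite !inE.
Qed.

Lemma empirical_distr N (y : {ffun 'I_N -> X}) : (0 < N)%N -> is_distr (empirical R y).
Proof.
move=> N_gt0; split=> [a|]; first by rewrite divr_ge0.
rewrite /empirical -mulr_suml.
under eq_bigr => a _ do rewrite -sum1dep_card natr_sum big_mkcond /=.
rewrite exchange_big /= (eq_bigr (fun=> 1)) => [|k _]; last first.
  by rewrite (bigD1 (y k)) //= eqxx big1 ?addr0 // => a /negbTE; rewrite eq_sym => ->.
by rewrite sumr_const card_ord divff // pnatr_eq0 -lt0n.
Qed.

Lemma distr_card_gt0 Q : is_distr Q -> (0 < #|X|)%N.
Proof.
case=> _ Q_sum1; rewrite lt0n; apply/negP => /eqP/card0_eq X_empty.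
by move: Q_sum1; rewrite big_pred0 // => /esym/eqP; rewrite oner_eq0.
Qed.

Lemma sum_set_indicator Q A : \sum_(a in A) Q a = \sum_a Q a * (a \in A)%:R.
Proof. by rewrite big_mkcond; apply: eq_bigr => a _; case: (a \in A); rewrite ?mulr1 ?mulr0. Qed.

Variable Q : X -> R.
Hypothesis Q_distr : is_distr Q.

Lemma Ptest_ge0 n (x : {ffun 'I_n -> X}) : 0 <= Ptest Q x.
Proof. by apply: prodr_ge0 => m _; apply: Q_distr.1. Qed.

Lemma Ptest_sum1 n : \sum_(x : {ffun 'I_n -> X}) Ptest Q x = 1.
Proof.
rewrite /Ptest -(bigA_distr_bigA (fun (m : 'I_n) a => Q a)) /=.
by rewrite Q_distr.2 prodr_const expr1n.
Qed.

Lemma Ptest_expR_sum n (h : X -> R) :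
  \sum_(x : {ffun 'I_n -> X}) Ptest Q x * expR (\sum_(m < n) h (x m)) =
  (\sum_a Q a * expR (h a)) ^+ n.
Proof.
under eq_bigr => x _ do rewrite expR_sum /Ptest -big_split /=.
by rewrite -(bigA_distr_bigA (fun (m : 'I_n) a => Q a * expR (h a))) prodr_const card_ord.
Qed.

Lemma mgf_set_indicator A s (q := \sum_(a in A) Q a) :
  \sum_a Q a * expR (s * ((a \in A)%:R - q)) =
  (1 - q + q * expR s) * expR (- (s * q)).
Proof.
transitivity (\sum_a expR (- (s * q)) * (Q a + Q a * (a \in A)%:R * (expR s - 1))).
  apply: eq_bigr => a _; case: (a \in A) => /=.
    by rewrite mulrBr mulr1 expRD; ring.
  by rewrite sub0r mulrN mulr0 mul0r addr0 mulrC.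
by rewrite -mulr_sumr big_split /= Q_distr.2 -mulr_suml -sum_set_indicator mulrC -/q; ring.
Qed.

Lemma hoeffding_upper n A e : (0 < n)%N -> 0 <= e ->
  \sum_(x : {ffun 'I_n -> X}) Ptest Q x * ((e <= mu_test R x A - \sum_(a in A) Q a)%R)%:R
  <= expR (- (2 * n%:R * e ^+ 2)).
Proof.
move=> n_gt0 e_ge0; set q := \sum_(a in A) Q a.
have n_gt0R : 0 < n%:R :> R by rewrite ltr0n.
have q_ge0 : 0 <= q by apply: sumr_ge0 => a _; apply: Q_distr.1.
have q_le1 : q <= 1.
  rewrite -Q_distr.2 [leRHS](bigID (mem A)) /= lerDl.
  by apply: sumr_ge0 => a _; apply: Q_distr.1.
(* Chernoff bound with the optimal parameter s = 4 e *)
set s := 4 * e; have s_ge0 : 0 <= s by rewrite mulr_ge0.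
apply: (@le_trans _ _ (\sum_(x : {ffun 'I_n -> X})
   Ptest Q x * expR (\sum_(m < n) s * ((x m \in A)%:R - q)) * expR (- (s * (n%:R * e))))).
  apply: ler_sum => x _; rewrite -mulrA -expRD ler_wpM2l ?Ptest_ge0 //.
  case: (lerP e (mu_test R x A - q)) => [dev_ge|_]; last exact: expR_ge0.
  apply: le_trans (expR_ge1Dx _); rewrite lerDl -mulr_sumr sumrB sumr_const card_ord.
  rewrite -mulrN -mulrDr mulr_ge0 // -mulr_natl.
  move: dev_ge; rewrite mu_test_sum -(ler_pM2r n_gt0R) mulrBl divfK ?gt_eqF //.
  rewrite -mulr_natr mulr1; lra.
rewrite -mulr_suml (Ptest_expR_sum n (fun a => s * ((a \in A)%:R - q))) mgf_set_indicator -/q.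
apply: le_trans (_ : expR (s ^+ 2 / 8) ^+ n * expR (- (s * (n%:R * e))) <= _).
  rewrite ler_wpM2r ?expR_ge0 // lerXn2r ?nnegrE ?expR_ge0 ?bernoulli_mgf_le //.
  by apply: mulr_ge0; [have := expR_ge0 s; nra | exact: expR_ge0].
by rewrite -expRM_natl -expRD ler_expR /s; nra.
Qed.

Lemma hoeffding n A e : (0 < n)%N -> 0 <= e ->
  \sum_(x : {ffun 'I_n -> X}) Ptest Q x * ((e <= `|mu_test R x A - \sum_(a in A) Q a|)%R)%:R
  <= 2 * expR (- (2 * n%:R * e ^+ 2)).
Proof.
move=> n_gt0 e_ge0.
have devC (x : {ffun 'I_n -> X}) : mu_test R x (~: A) - \sum_(a in ~: A) Q a =
              - (mu_test R x A - \sum_(a in A) Q a).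
  have : \sum_(a in A) Q a + \sum_(a in ~: A) Q a = 1.
    rewrite -Q_distr.2 [RHS](bigID (mem A)) /=.
    by congr (_ + _); apply: eq_bigl => a; rewrite inE.
  by rewrite mu_testC //; lra.
rewrite mulr2n mulrDl mul1r; apply: le_trans (lerD (hoeffding_upper A n_gt0 e_ge0)
                                          (hoeffding_upper (~: A) n_gt0 e_ge0)).
rewrite -big_split /=; apply: ler_sum => x _; rewrite -mulrDr ler_wpM2l ?Ptest_ge0 // devC.
set z := mu_test R x A - _.
by case: (lerP 0 z) => [/ger0_norm|/ltr0_norm] ->; rewrite ?lerDl ?lerDr ler0n.
Qed.

Lemma hoeffding_empirical n a e : (0 < n)%N -> 0 <= e ->
  \sum_(y : {ffun 'I_n -> X}) Ptest Q y * ((e < `|empirical R y a - Q a|)%R)%:R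
  <= 2 * expR (- (2 * n%:R * e ^+ 2)).
Proof.
move=> n_gt0 e_ge0; apply: le_trans (hoeffding [set a] n_gt0 e_ge0).
apply: ler_sum => y _; rewrite ler_wpM2l ?Ptest_ge0 // empirical_mu_test big_set1.
by case: ltrP => //= /ltW ->.
Qed.

End EmpiricalFrequency.

Section TotalVariation.
Context {R : realType} {X : finType}.
Implicit Types (p q r : X -> R) (A : {set X}).

Lemma tvdist_ge0 p q : 0 <= tvdist p q.
Proof. by rewrite mulr_ge0 // sumr_ge0. Qed.

Lemma tvdistC p q : tvdist p q = tvdist q p.
Proof. by congr (_ * _); apply: eq_bigr => a _; rewrite distrC. Qed.

Lemma tvdist_triangle p q r : tvdist p r <= tvdist p q + tvdist q r.
Proof.
rewrite /tvdist -mulrDr ler_wpM2l // -big_split /=.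
by apply: ler_sum => a _; apply: ler_distD.
Qed.

Lemma tvdist_le_card p q d :
  (forall a, `|p a - q a| <= d) -> tvdist p q <= 2^-1 * (#|X|%:R * d).
Proof.
move=> pq_le; rewrite ler_wpM2l //.
by apply: le_trans (_ : \sum_(a : X) d <= _); [exact: ler_sum | rewrite sumr_const mulr_natl].
Qed.

Section Distributions.
Context {p q : X -> R}.
Hypotheses (p_sum1 : \sum_a p a = 1) (q_sum1 : \sum_a q a = 1).

Let sum_diff_split A :
  \sum_(a in A) (p a - q a) + \sum_(a | a \notin A) (p a - q a) = 0.
Proof.
have : \sum_a (p a - q a) = 0 by rewrite sumrB p_sum1 q_sum1 subrr.
by rewrite (bigID (mem A)).
Qed.

Lemma set_dist_le_tvdist A :
  `|\sum_(a in A) p a - \sum_(a in A) q a| <= tvdist p q.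
Proof.
have split_A := sum_diff_split A.
rewrite -sumrB /tvdist [X in _ <= _ * X](bigID (mem A)) /=.
have in_A : `|\sum_(a in A) (p a - q a)| <= \sum_(a in A) `|p a - q a|.
  exact: ler_norm_sum.
have notin_A : `|\sum_(a | a \notin A) (p a - q a)| <= \sum_(a | a \notin A) `|p a - q a|.
  exact: ler_norm_sum.
have opp_sums : \sum_(a | a \notin A) (p a - q a) = - \sum_(a in A) (p a - q a) by lra.
rewrite opp_sums normrN in notin_A; lra.
Qed.

Lemma scheffe_set_tvdist :
  \sum_(a in [set a | q a <= p a]) p a - \sum_(a in [set a | q a <= p a]) q a =
  tvdist p q.
Proof.
set A := [set a | q a <= p a]; have split_A := sum_diff_split A.
rewrite -sumrB /tvdist [X in _ = _ * X](bigID (mem A)) /=.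
have -> : \sum_(a in A) `|p a - q a| = \sum_(a in A) (p a - q a).
  by apply: eq_bigr => a; rewrite inE => qp; rewrite ger0_norm // subr_ge0.
have -> : \sum_(a | a \notin A) `|p a - q a| = - \sum_(a | a \notin A) (p a - q a).
  rewrite -sumrN; apply: eq_bigr => a; rewrite inE -ltNge => pq.
  by rewrite ltr0_norm // subr_lt0.
lra.
Qed.

End Distributions.
End TotalVariation.

Lemma ler_sum2_term {R : numDomainType} (I J : finType) (F : I -> J -> R) i j :
  (forall i j, 0 <= F i j) -> F i j <= \sum_i \sum_j F i j.
Proof.
move=> F_ge0; rewrite pair_bigA (bigD1 (i, j)) //= lerDl.
by apply: sumr_ge0 => p _; apply: F_ge0.
Qed.

Section Deviations.
Context {R : realType} {X : finType} {M N n : nat} (P : 'I_M -> X -> R).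

Definition train_devs (d : R) (t : {ffun 'I_M -> {ffun 'I_N -> X}}) : R :=
  \sum_(k < M) \sum_(a : X) ((d < `|empirical R (t k) a - P k a|)%R)%:R.

Definition test_devs (i : 'I_M) (d : R) (t : {ffun 'I_M -> {ffun 'I_N -> X}})
    (x : {ffun 'I_n -> X}) : R :=
  \sum_(k < M) \sum_(l < M) (((k < l)%N &&
    (d <= `|mu_test R x (scheffe R t k l) - \sum_(a in scheffe R t k l) P i a|))%R)%:R.

End Deviations.

Section DGLCorrect.
Context {R : realType} {X : finType} {M N n : nat} (P : 'I_M -> X -> R).
Variables (t : {ffun 'I_M -> {ffun 'I_N -> X}}) (x : {ffun 'I_n -> X}).
Hypotheses (P_distr : forall i, is_distr (P i)) (N_gt0 : (0 < N)%N).

Notation T i := (empirical R (t i)).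
Notation A k l := (scheffe R t k l).

Let T_sum1 k : \sum_a T k a = 1.
Proof. exact: (empirical_distr (t k) N_gt0).2. Qed.

Lemma score_ge j (k l : 'I_M) : (k < l)%N ->
  `|emp_set R (t j) (A k l) - mu_test R x (A k l)| <= score R t x j.
Proof. by move=> kl; apply: (bigmax_sup k) => //; apply: (bigmax_sup l). Qed.

Lemma score_le i d : 0 <= d ->
  (forall k l : 'I_M, (k < l)%N -> `|mu_test R x (A k l) - \sum_(a in A k l) P i a| <= d) ->
  score R t x i <= tvdist (T i) (P i) + d.
Proof.
move=> d_ge0 mu_close; have tv_ge0 := tvdist_ge0 (T i) (P i).
apply: bigmax_le => [|k _]; first lra.
apply: bigmax_le => [|l kl]; first lra.
apply: le_trans (ler_distD (\sum_(a in A k l) P i a) _ _) _.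
by rewrite lerD ?set_dist_le_tvdist 1?distrC ?mu_close ?T_sum1 ?(P_distr i).2.
Qed.

Lemma scheffe_tvdist i j : i != j -> exists k l : 'I_M, (k < l)%N /\
  `|emp_set R (t i) (A k l) - emp_set R (t j) (A k l)| = tvdist (T i) (T j).
Proof.
move=> ij; case: (ltngtP i j) => [ij_lt|ji_lt|/val_inj ij_eq]; last by rewrite ij_eq eqxx in ij.
- exists i, j; split=> //.
  by rewrite /emp_set scheffe_set_tvdist // ger0_norm // tvdist_ge0.
- exists j, i; split=> //.
  by rewrite /emp_set distrC scheffe_set_tvdist // ger0_norm ?tvdist_ge0 // tvdistC.
Qed.

Lemma DGL_rule_correct g i D d1 d2 : DGL_rule R g ->
  (forall j, j != i -> D <= tvdist (P i) (P j)) ->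
  2 * (#|X|%:R * d1 + d2) <= D ->
  (forall k a, `|T k a - P k a| <= d1) ->
  (forall k l : 'I_M, (k < l)%N -> `|mu_test R x (A k l) - \sum_(a in A k l) P i a| < d2) ->
  g t x = i.
Proof.
move=> g_min D_le D_ge T_close mu_close; apply/eqP; apply/negPn/negP => gi.
set j := g t x in gi; have ij : i != j by rewrite eq_sym.
have [k [l [kl tvT]]] := scheffe_tvdist ij.
have d2_ge0 := ltW (le_lt_trans (normr_ge0 _) (mu_close k l kl)).
have si := score_le d2_ge0 (fun k l kl => ltW (mu_close k l kl)).
have sj := score_ge j kl.
have sji : score R t x j <= score R t x i := g_min t x i.
set TiA := emp_set R (t i) (A k l) in tvT *; set TjA := emp_set R (t j) (A k l) in tvT sj *.
set muA := mu_test R x (A k l) in sj *; set PiA := \sum_(a in A k l) P i a.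
have hiA : `|TiA - PiA| <= tvdist (T i) (P i) := set_dist_le_tvdist (T_sum1 i) (P_distr i).2 _.
have ad_tri := ler_distD PiA TiA muA.
have ab_tri := ler_distD muA TiA TjA.
have := mu_close k l kl; rewrite -/muA -/PiA distrC => muPi.
have := tvdist_triangle (P i) (T i) (P j); rewrite (tvdistC (P i) (T i)).
have := tvdist_triangle (T i) (T j) (P j).
have := tvdist_le_card (T_close i); have := tvdist_le_card (T_close j).
have := D_le j gi; rewrite (distrC TjA) in sj; lra.
Qed.

Lemma DGL_error_indicator g i D d1 d2 : DGL_rule R g ->
  (forall j, j != i -> D <= tvdist (P i) (P j)) ->
  2 * (#|X|%:R * d1 + d2) <= D ->
  (g t x != i)%:R <= train_devs P d1 t + test_devs P i d2 t x.
Proof.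
move=> g_min D_le D_ge; rewrite /train_devs /test_devs.
have sum2_ge0 (I J : finType) (B : I -> J -> bool) : 0 <= \sum_i \sum_j (B i j)%:R :> R.
  by apply: sumr_ge0 => i' _; apply: sumr_ge0.
have [_|gi] /= := eqVneq (g t x) i; first by rewrite addr_ge0 ?sum2_ge0.
have [/existsP[k /existsP[a T_far]]|/existsPn T_close] :=
  boolP [exists k, exists a, d1 < `|T k a - P k a|].
  rewrite -[leLHS]addr0 lerD ?sum2_ge0 //.
  by apply: (le_trans _ (ler_sum2_term k a _)) => [|? ?]; rewrite /= ?T_far ?ler0n.
have [/existsP[k /existsP[l mu_far]]|/existsPn mu_close] :=
  boolP [exists k : 'I_M, exists l : 'I_M,
           (k < l)%N && (d2 <= `|mu_test R x (A k l) - \sum_(a in A k l) P i a|)].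
  rewrite -[leLHS]add0r lerD ?sum2_ge0 //.
  by apply: (le_trans _ (ler_sum2_term k l _)) => [|? ?]; rewrite /= ?mu_far ?ler0n.
move: gi; rewrite (DGL_rule_correct g_min D_le D_ge) ?eqxx // => [k a|k l kl].
  by move/existsPn/(_ a): (T_close k); rewrite -leNgt.
by move/existsPn/(_ l): (mu_close k); rewrite kl -ltNge.
Qed.

End DGLCorrect.

Lemma sum_ord_ltn_pairs {R : numFieldType} M :
  \sum_(k < M) \sum_(l < M) ((k < l)%N)%:R = M%:R * (M%:R - 1) / 2 :> R.
Proof.
set S := LHS; have S_sym : S = \sum_(k < M) \sum_(l < M) ((l < k)%N)%:R by rewrite exchange_big.
have neq_card (k : 'I_M) : \sum_(l < M) (k != l)%:R = M%:R - 1 :> R.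
  rewrite (bigD1 k) //= eqxx add0r (eq_bigr (fun=> 1)) => [|l]; last by rewrite eq_sym => ->.
  rewrite sumr_const (cardC1 k) card_ord -subn1 natrB //.
  exact: leq_ltn_trans (leq0n k) (ltn_ord k).
suff : S + S = M%:R * (M%:R - 1) by move=> <-; field.
rewrite {2}S_sym -big_split /=.
transitivity (\sum_(k < M) (M%:R - 1 : R)); last by rewrite sumr_const card_ord mulr_natl.
apply: eq_bigr => k _; rewrite -big_split -(neq_card k); apply: eq_bigr => l _ /=.
case: ltngtP => [kl|lk|/val_inj ->]; last by rewrite eqxx addr0.
  by rewrite -val_eqE (ltn_eqF kl) addr0.
by rewrite -val_eqE (gtn_eqF lk) add0r.
Qed.

Lemma union_bound_le_rate {R : realFieldType} (m c E K p : R) :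
  2 <= m -> 0 <= c -> c <= K -> (m - 1) ^+ 2 <= K -> 0 <= E ->
  p <= 1 -> p <= 2 * m * c * E ^+ 2 + m * (m - 1) * E -> p <= 2 * m * (E * K).
Proof.
move=> m_ge2 c_ge0 cK mK E_ge0 p_le1 p_le.
have K_ge1 : 1 <= K by apply: le_trans _ mK; rewrite expr2; nra.
have [E_small|E_large] := lerP E (2^-1); last first.
  have mE : 1 <= 2 * m * E by nra.
  by apply: le_trans p_le1 _; rewrite mulrA -[leLHS]mulr1 ler_pM.
have m1K : m - 1 <= K by apply: le_trans _ mK; rewrite expr2; nra.
have m_ge0 : 0 <= m by apply: le_trans m_ge2.
have cE2 : 2 * (c * E * E) <= K * E.
  have := ler_wpM2r E_ge0 cK; have := ler_wpM2l (mulr_ge0 c_ge0 E_ge0) E_small; lra.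
have := ler_wpM2l m_ge0 cE2; have := ler_wpM2l m_ge0 (ler_wpM2r E_ge0 m1K).
move: p_le; rewrite expr2; nra.
Qed.

Lemma expR_max_ln_ge {R : realType} (b c : R) : 0 < b -> 0 < c ->
  b ^+ 2 <= expR (Num.max (2 * ln b) (ln c)) /\ c <= expR (Num.max (2 * ln b) (ln c)).
Proof.
move=> b_gt0 c_gt0; split.
  by rewrite -{1}(lnK b_gt0) -expRM_natl ler_expR le_max lexx.
by rewrite -{1}(lnK c_gt0) ler_expR le_max lexx orbT.
Qed.

Lemma Dmin_le_tvdist {R : realType} {X : finType} {M : nat} (P : 'I_M -> X -> R) i j :
  i != j -> Dmin P <= tvdist (P i) (P j).
Proof. by move=> ij; apply: (bigmin_inf i) => //; apply: bigmin_le_cond. Qed.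

Lemma Dmin_ge0 {R : realType} {X : finType} {M : nat} (P : 'I_M -> X -> R) :
  0 <= Dmin P.
Proof.
by apply: le_bigmin => [|i _] //; apply: le_bigmin => [|j _] //; apply: tvdist_ge0.
Qed.

Section ErrorBound.
Context {R : realType} {X : finType} {M N n : nat} (P : 'I_M -> X -> R).
Hypothesis P_distr : forall i, is_distr (P i).

Lemma Ptrain_ge0 (t : {ffun 'I_M -> {ffun 'I_N -> X}}) : 0 <= Ptrain P t.
Proof. by apply: prodr_ge0 => i _; apply: Ptest_ge0. Qed.

Lemma Ptrain_sum1 : \sum_(t : {ffun 'I_M -> {ffun 'I_N -> X}}) Ptrain P t = 1.
Proof.
rewrite -(bigA_distr_bigA (fun i (y : {ffun 'I_N -> X}) => Ptest (P i) y)) /=.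
by rewrite big1 // => i _; apply: Ptest_sum1.
Qed.

Lemma Ptrain_marginal k (h : {ffun 'I_N -> X} -> R) :
  \sum_(t : {ffun 'I_M -> {ffun 'I_N -> X}}) Ptrain P t * h (t k) =
  \sum_(y : {ffun 'I_N -> X}) Ptest (P k) y * h y.
Proof.
pose G i (y : {ffun 'I_N -> X}) := Ptest (P i) y * (if i == k then h y else 1).
transitivity (\sum_(t : {ffun 'I_M -> {ffun 'I_N -> X}}) \prod_i G i (t i)).
  apply: eq_bigr => t _; rewrite /G big_split /=; congr (_ * _).
  by rewrite (bigD1 k) //= eqxx big1 ?mulr1 // => i /negbTE ->.
rewrite -(bigA_distr_bigA G) (bigD1 k) //= [X in _ * X]big1 ?mulr1.
  by apply: eq_bigr => y _; rewrite /G eqxx.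
move=> i /negbTE ik; rewrite /G ik.
under eq_bigr do rewrite mulr1.
exact: Ptest_sum1.
Qed.

Definition cond_err (g : {ffun 'I_M -> {ffun 'I_N -> X}} -> {ffun 'I_n -> X} -> 'I_M)
  (i : 'I_M) : R :=
  \sum_(t : {ffun 'I_M -> {ffun 'I_N -> X}}) \sum_(x : {ffun 'I_n -> X})
    (if g t x != i then Ptrain P t * Ptest (P i) x else 0).

Lemma cond_err_le1 g i : cond_err g i <= 1.
Proof.
apply: le_trans (_ : \sum_t \sum_x Ptrain P t * Ptest (P i) x <= _).
  apply: ler_sum => t _; apply: ler_sum => x _.
  by case: ifP => _; rewrite ?mulr_ge0 ?Ptrain_ge0 ?Ptest_ge0.
under eq_bigr do rewrite -mulr_sumr (Ptest_sum1 (P_distr i)) mulr1.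
by rewrite Ptrain_sum1.
Qed.

Lemma cond_err_le g i d1 d2 : (0 < N)%N -> (0 < n)%N -> DGL_rule R g ->
  0 <= d1 -> 0 <= d2 -> 2 * (#|X|%:R * d1 + d2) <= Dmin P ->
  cond_err g i <= 2 * M%:R * #|X|%:R * expR (- (2 * N%:R * d1 ^+ 2)) +
                  M%:R * (M%:R - 1) * expR (- (2 * n%:R * d2 ^+ 2)).
Proof.
move=> N_gt0 n_gt0 g_min d1_ge0 d2_ge0 D_ge.
have D_le j : j != i -> Dmin P <= tvdist (P i) (P j).
  by move=> ji; apply: Dmin_le_tvdist; rewrite eq_sym.
apply: (@le_trans _ _ (\sum_t Ptrain P t *
    (train_devs P d1 t + \sum_(x : {ffun 'I_n -> X}) Ptest (P i) x * test_devs P i d2 t x))).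
  apply: ler_sum => t _.
  have split_devs : \sum_(x : {ffun 'I_n -> X}) Ptest (P i) x *
                      (train_devs P d1 t + test_devs P i d2 t x) =
                    train_devs P d1 t +
                    \sum_(x : {ffun 'I_n -> X}) Ptest (P i) x * test_devs P i d2 t x.
    under eq_bigr do rewrite mulrDr.
    by rewrite big_split /= -mulr_suml (Ptest_sum1 (P_distr i)) mul1r.
  rewrite -split_devs mulr_sumr; apply: ler_sum => x _; rewrite mulrA.
  have -> : (if g t x != i then Ptrain P t * Ptest (P i) x else 0) =
            Ptrain P t * Ptest (P i) x * (g t x != i)%:R by case: ifP; rewrite ?mulr1 ?mulr0.
  by rewrite ler_wpM2l ?mulr_ge0 ?Ptrain_ge0 ?Ptest_ge0 //
             (DGL_error_indicator t x P_distr N_gt0 g_min D_le D_ge).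
under eq_bigr do rewrite mulrDr; rewrite big_split /=; apply: lerD.
- apply: le_trans (_ : \sum_(k < M) \sum_(a : X) 2 * expR (- (2 * N%:R * d1 ^+ 2)) <= _).
    rewrite /train_devs; under eq_bigr do rewrite mulr_sumr; rewrite exchange_big /=.
    apply: ler_sum => k _; under eq_bigr do rewrite mulr_sumr; rewrite exchange_big /=.
    apply: ler_sum => a _.
    rewrite (Ptrain_marginal k (fun y => ((d1 < `|empirical R y a - P k a|)%R)%:R)).
    exact: hoeffding_empirical.
  suff -> : \sum_(k < M) \sum_(a : X) 2 * expR (- (2 * N%:R * d1 ^+ 2)) =
            2 * M%:R * #|X|%:R * expR (- (2 * N%:R * d1 ^+ 2)) by [].
  rewrite !sumr_const card_ord -[_ *+ M]mulr_natr -[_ *+ #|_|]mulr_natr; ring.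
- apply: le_trans (_ : \sum_t Ptrain P t *
      (\sum_(k < M) \sum_(l < M) ((k < l)%N)%:R * (2 * expR (- (2 * n%:R * d2 ^+ 2)))) <= _).
    apply: ler_sum => t _; rewrite ler_wpM2l ?Ptrain_ge0 // /test_devs.
    under eq_bigr do rewrite mulr_sumr; rewrite exchange_big /=.
    apply: ler_sum => k _; under eq_bigr do rewrite mulr_sumr; rewrite exchange_big /=.
    apply: ler_sum => l _; case: (k < l)%N => /=; last first.
      by rewrite mul0r big1 // => x _; rewrite mulr0.
    by rewrite mul1r hoeffding.
  rewrite -big_distrl /= Ptrain_sum1 mul1r.
  under eq_bigr do rewrite -big_distrl /=.
  by rewrite -big_distrl /= sum_ord_ltn_pairs mulrA divfK ?pnatr_eq0 // mulrC.
Qed.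

Lemma cond_err_rate g i (del K : R) :
  (0 < N)%N -> (0 < n)%N -> (2 <= M)%N -> DGL_rule R g -> 0 <= del ->
  (3 * #|X|%:R + 2 * Num.sqrt (N%:R / n%:R)) * del <= Dmin P ->
  (M%:R - 1) ^+ 2 <= K -> #|X|%:R <= K ->
  cond_err g i <= 2 * M%:R * (expR (- (2 * N%:R * del ^+ 2)) * K).
Proof.
move=> N_gt0 n_gt0 M_ge2 g_min del_ge0 D_ge MK XK.
move: D_ge; set sa := Num.sqrt _ => D_ge; have sa_ge0 : 0 <= sa := sqrtr_ge0 _.
have n_sa : n%:R * sa ^+ 2 = N%:R.
  by rewrite sqr_sqrtr ?divr_ge0 // mulrC divfK // pnatr_eq0 -lt0n.
have d1_ge0 : 0 <= 3 * del / 2 by rewrite divr_ge0 ?mulr_ge0.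
have D_ge' : 2 * (#|X|%:R * (3 * del / 2) + sa * del) <= Dmin P.
  by apply: le_trans D_ge; rewrite le_eqVlt; apply/predU1l; field.
have := cond_err_le i N_gt0 n_gt0 g_min d1_ge0 (mulr_ge0 sa_ge0 del_ge0) D_ge'.
(* Both choices make the Hoeffding exponents at least 2 N del^2, the training
   one with a factor 2 to spare. *)
have -> : expR (- (2 * n%:R * (sa * del) ^+ 2)) = expR (- (2 * N%:R * del ^+ 2)).
  by rewrite -n_sa; congr (expR (- _)); ring.
have train_le :
    expR (- (2 * N%:R * (3 * del / 2) ^+ 2)) <= expR (- (2 * N%:R * del ^+ 2)) ^+ 2.
  rewrite -expRM_natl ler_expR.
  have : 0 <= N%:R * del ^+ 2 :> R by rewrite mulr_ge0 ?sqr_ge0.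
  lra.
move=> union_le.
apply: (union_bound_le_rate (c := #|X|%:R)) (cond_err_le1 g i) _ => //.
  by rewrite ler_nat.
by apply: le_trans union_le _; rewrite lerD2r ler_wpM2l.
Qed.

End ErrorBound.

Theorem corollary2 (R : realType) (X : finType) (M N n : nat)
  (P : 'I_M -> X -> R) (pi : 'I_M -> R)
  (g : {ffun 'I_M -> {ffun 'I_N -> X}} -> {ffun 'I_n -> X} -> 'I_M) :
  (2 <= M)%N -> (1 <= n)%N -> (1 <= N)%N ->
  (forall i, is_distr (P i)) ->
  (forall i, 0 < pi i) -> \sum_(i < M) pi i = 1 ->
  @DGL_rule R X M N n g ->
  let alpha : R := N%:R / n%:R in
  let D : R := Dmin P in
  err_CL P pi g <=
    2 * M%:R * expR (- (n%:R * (2 * alpha * D ^+ 2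
                  / (3 * #|X|%:R + 2 * Num.sqrt alpha) ^+ 2
              - Num.max (2 * ln (M%:R - 1) / n%:R) (ln #|X|%:R / n%:R)))).
Proof.
move=> M_ge2 n_gt0 N_gt0 P_distr pi_gt0 pi_sum1 g_min; cbv zeta.
set alpha := N%:R / n%:R; set D := Dmin P.
have n_gt0R : 0 < n%:R :> R by rewrite ltr0n.
set den := 3 * #|X|%:R + 2 * Num.sqrt alpha.
have den_gt0 : 0 < den by rewrite ltr_wpDl ?mulr_ge0 ?mulr_gt0 ?sqrtr_gt0 ?divr_gt0 ?ltr0n.
set del := D / den.
have -> : n%:R * (2 * alpha * D ^+ 2 / den ^+ 2 -
            Num.max (2 * ln (M%:R - 1) / n%:R) (ln #|X|%:R / n%:R)) =
          2 * N%:R * del ^+ 2 - Num.max (2 * ln (M%:R - 1)) (ln #|X|%:R).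
  have n_div (b : R) : n%:R * (b / n%:R) = b by rewrite mulrC divfK ?gt_eqF.
  rewrite mulrBr maxr_pMr ?ler0n // !n_div /del /alpha; congr (_ - _).
  by field; rewrite !gt_eqF.
rewrite opprB addrC expRD.
have M1_gt0 : 0 < M%:R - 1 :> R by rewrite subr_gt0 ltr1n.
have X_gt0 : 0 < #|X|%:R :> R.
  by rewrite ltr0n (distr_card_gt0 (P_distr (Ordinal (ltnW M_ge2)))).
have [MK XK] := expR_max_ln_ge M1_gt0 X_gt0.
apply: le_trans (_ : \sum_i pi i * (2 * M%:R * (expR (- (2 * N%:R * del ^+ 2)) *
                       expR (Num.max (2 * ln (M%:R - 1)) (ln #|X|%:R)))) <= _).
  apply: ler_sum => i _; apply: ler_wpM2l; first exact: ltW.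
  apply: cond_err_rate => //.
  - by rewrite divr_ge0 ?Dmin_ge0 ?ltW.
  - by rewrite /del mulrC divfK ?gt_eqF.
by rewrite -mulr_suml pi_sum1 mul1r.
Qed.
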